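(* Let $R$ be a unital associative ring and $M\in{\cal S}$. Then $M^{-1}\in{\cal S}$.
   Context: For $M\in M_3(R)$ with all entries invertible, $J_2(M)$ is the matrix with $(j,k)$-entry $(M_{kj})^{-1}$. ${\cal S}=\{M\in M_3(R):$ all square submatrices of $M$ (including $1\times1$ ones and $M$ itself) are invertible and $J_2(M)$ is invertible$\}$. *)

From mathcomp Require Import all_boot all_order all_algebra.
Set Implicit Arguments. Unset Strict Implicit. Unset Printing Implicit Defensive.
Import GRing.Theory.
Local Open Scope ring_scope.

Definition mx_invertible (R : unitRingType) (n : nat) (A : 'M[R]_n) : Prop :=
  exists B : 'M[R]_n, A *m B = 1%:M /\ B *m A = 1%:M.

Definition J2 (R : unitRingType) (M : 'M[R]_3) : 'M[R]_3 :=
  \matrix_(j < 3, k < 3) (M k j)^-1.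

Definition sq_submx (R : unitRingType) (M : 'M[R]_3) (k : nat)
  (f g : 'I_k -> 'I_3) : 'M[R]_k := mxsub f g M.

Definition strict_incr (k : nat) (f : 'I_k -> 'I_3) : Prop :=
  forall i j : 'I_k, (i < j)%N -> (f i < f j)%N.

Definition inS (R : unitRingType) (M : 'M[R]_3) : Prop :=
  (forall i j, M i j \is a GRing.unit) /\
  (forall (k : nat) (f g : 'I_k -> 'I_3),
      (0 < k)%N -> strict_incr f -> strict_incr g ->
      mx_invertible (sq_submx M f g)) /\
  mx_invertible (J2 M).

(* Complementary minors: writing M and N = M^-1 as 2x2 block matrices after
   permuting rows and columns, the lower right block of N is the inverse of the
   Schur complement of the upper left block of M.  Hence every minor of N is
   invertible as soon as the complementary minor of M (rows and columns
   exchanged) is, and since all minors of M are invertible, so are those of N.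

   For J_2 we take Schur complements with respect to the (0,0) entry: J_2(T) is
   invertible iff a 2x2 matrix K(T) is, whose entries are, up to invertible
   factors, the quasideterminants T_00 - T_0a T_ba^-1 T_b0 of 2x2 minors of T.
   Applying the block inverse formula twice, such a quasideterminant of N is the
   inverse of a complementary quasideterminant of M, so K(N) is, up to
   invertible diagonal scalings, the matrix of inverses of the entries of K(M)
   with rows and columns reversed and transposed.  Its Schur complement is then
   a unit multiple of that of K(M), which is a unit because J_2(M) is
   invertible. *)

From mathcomp Require Import all_boot all_order all_algebra zify.
Set Implicit Arguments. Unset Strict Implicit. Unset Printing Implicit Defensive.
Import GRing.Theory.
Local Open Scope ring_scope.

Definition glue p q n (u : 'I_p -> 'I_n) (v : 'I_q -> 'I_n) (i : 'I_(p + q)) : 'I_n :=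
  match split i with inl j => u j | inr k => v k end.

Lemma glue_lshift p q n (u : 'I_p -> 'I_n) (v : 'I_q -> 'I_n) i : glue u v (lshift q i) = u i.
Proof. by rewrite /glue (unsplitK (inl _ i)). Qed.

Lemma glue_rshift p q n (u : 'I_p -> 'I_n) (v : 'I_q -> 'I_n) k : glue u v (rshift p k) = v k.
Proof. by rewrite /glue (unsplitK (inr _ k)). Qed.

Lemma glue_inj p q n (u : 'I_p -> 'I_n) (v : 'I_q -> 'I_n) :
  injective u -> injective v -> (forall j k, u j != v k) -> injective (glue u v).
Proof.
move=> inj_u inj_v uv i i'; rewrite /glue => e; apply: (can_inj splitK); move: e.
case: (split i) => j; case: (split i') => j' e.
- by rewrite (inj_u _ _ e).
- by move: (uv j j'); rewrite e eqxx.
- by move: (uv j' j); rewrite e eqxx.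
- by rewrite (inj_v _ _ e).
Qed.

Section SchurComplement.
Variable R : unitRingType.

Lemma mx_invertibleM n (A B : 'M[R]_n) :
  mx_invertible A -> mx_invertible B -> mx_invertible (A *m B).
Proof.
move=> [A' [AA' A'A]] [B' [BB' B'B]]; exists (B' *m A'); split.
  by rewrite mulmxA -(mulmxA A) BB' mulmx1 AA'.
by rewrite mulmxA -(mulmxA B') A'A mulmx1 B'B.
Qed.

Definition schur_compl p q (A : 'M[R]_(p + q)) (a' : 'M[R]_p) : 'M[R]_q :=
  drsubmx A - dlsubmx A *m a' *m ursubmx A.

Lemma schur_compl_mulmx p q (A Z : 'M[R]_(p + q)) (a' : 'M[R]_p) :
  ulsubmx A *m a' = 1%:M -> a' *m ulsubmx A = 1%:M ->
  A *m Z = 1%:M -> Z *m A = 1%:M ->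
  schur_compl A a' *m drsubmx Z = 1%:M /\ drsubmx Z *m schur_compl A a' = 1%:M.
Proof.
rewrite /schur_compl -[A]submxK -[Z]submxK !block_mxKul !block_mxKur !block_mxKdl !block_mxKdr.
set a := ulsubmx A; set b := ursubmx A; set c := dlsubmx A; set d := drsubmx A.
set z2 := ursubmx Z; set z3 := dlsubmx Z; set z4 := drsubmx Z.
move=> aa' a'a; rewrite !mulmx_block scalar_mx_block.
move=> /eq_block_mx[_ az2 _ cz2] /eq_block_mx[_ _ z4c z3b]; split.
  have bz4 : b *m z4 = - (a *m z2) by apply/eqP; rewrite -subr_eq0 opprK addrC az2.
  have a'bz4 : a' *m b *m z4 = - z2 by rewrite -mulmxA bz4 mulmxN mulmxA a'a mul1mx.
  by rewrite mulmxBl -!mulmxA (mulmxA a') a'bz4 mulmxN opprK addrC.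
have z4c' : z4 *m c = - (z3 *m a) by apply/eqP; rewrite -subr_eq0 opprK addrC z4c.
have z4ca' : z4 *m c *m a' = - z3 by rewrite z4c' mulNmx -mulmxA aa' mulmx1.
by rewrite mulmxBr !mulmxA z4ca' mulNmx opprK addrC.
Qed.

Lemma mx_invertible_schur p q (A : 'M[R]_(p + q)) (a' : 'M[R]_p) :
  ulsubmx A *m a' = 1%:M -> a' *m ulsubmx A = 1%:M ->
  mx_invertible A <-> mx_invertible (schur_compl A a').
Proof.
move=> aa' a'a; split=> [[Z [AZ ZA]] | [S [sS Ss]]].
  by exists (drsubmx Z); apply: schur_compl_mulmx.
rewrite -[A]submxK; rewrite /schur_compl in sS Ss.
set a := ulsubmx A in aa' a'a *; set b := ursubmx A in sS Ss *.
set c := dlsubmx A in sS Ss *; set s := schur_compl A a'.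
have -> : block_mx a b c (drsubmx A) =
    block_mx 1%:M 0 (c *m a') 1%:M *m block_mx a 0 0 s *m block_mx 1%:M (a' *m b) 0 1%:M.
  rewrite !mulmx_block !mulmx0 !mul0mx !mul1mx !mulmx1 !addr0 !add0r.
  by rewrite !mulmxA aa' mul1mx -(mulmxA c) a'a mulmx1 /s /schur_compl addrC subrK.
apply: mx_invertibleM; first apply: mx_invertibleM.
- exists (block_mx 1%:M 0 (- (c *m a')) 1%:M).
  by rewrite !mulmx_block !mulmx0 !mul0mx !mul1mx !mulmx1 !addr0 !add0r
     subrr addrC subrr -scalar_mx_block.
- exists (block_mx a' 0 0 S).
  by rewrite !mulmx_block !mulmx0 !mul0mx !addr0 !add0r aa' a'a sS Ss -scalar_mx_block.
- exists (block_mx 1%:M (- (a' *m b)) 0 1%:M).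
  by rewrite !mulmx_block !mulmx0 !mul0mx !mul1mx !mulmx1 !addr0 !add0r
     subrr addrC subrr -scalar_mx_block.
Qed.

Lemma mulmx_mxsub_perm m n (M N : 'M[R]_n) (s t : 'I_m -> 'I_n) :
  M *m N = 1%:M -> bijective s -> injective t -> mxsub t s M *m mxsub s t N = 1%:M.
Proof.
move=> MN bij_s inj_t; apply/matrixP => i j; rewrite [LHS]mxE.
transitivity ((M *m N) (t i) (t j)); last by rewrite MN !mxE (inj_eq inj_t).
rewrite [RHS]mxE (reindex s) /=; last exact: onW_bij.
by apply: eq_bigr => k _; rewrite !mxE.
Qed.

Lemma complementary_minor p q (M N : 'M[R]_(p + q))
    (ru cu : 'I_p -> 'I_(p + q)) (rv cv : 'I_q -> 'I_(p + q)) :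
  M *m N = 1%:M -> N *m M = 1%:M ->
  injective (glue ru rv) -> injective (glue cu cv) ->
  mx_invertible (mxsub cu ru M) -> mx_invertible (mxsub rv cv N).
Proof.
move=> MN NM inj_s inj_t [a' [aa' a'a]].
have ulM : ulsubmx (mxsub (glue cu cv) (glue ru rv) M) = mxsub cu ru M.
  by apply/matrixP => i j; rewrite !mxE !glue_lshift.
have drN : drsubmx (mxsub (glue ru rv) (glue cu cv) N) = mxsub rv cv N.
  by apply/matrixP => i j; rewrite !mxE !glue_rshift.
rewrite -ulM in aa' a'a; rewrite -drN.
exists (schur_compl (mxsub (glue cu cv) (glue ru rv) M) a').
apply/and_comm/schur_compl_mulmx => //.
- exact: mulmx_mxsub_perm (injF_bij inj_s) inj_t.
- exact: mulmx_mxsub_perm (injF_bij inj_t) inj_s.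
Qed.

Lemma mx11_mul1 (A B : 'M[R]_1) : A *m B = 1%:M <-> A ord0 ord0 * B ord0 ord0 = 1.
Proof.
split=> [/matrixP/(_ ord0 ord0) | AB]; first by rewrite !mxE big_ord1 mulr1n.
by apply/matrixP => i j; rewrite !ord1 !mxE big_ord1 mulr1n.
Qed.

Lemma mx1_invertible (A : 'M[R]_1) : mx_invertible A <-> A ord0 ord0 \is a GRing.unit.
Proof.
split=> [[B [/mx11_mul1 AB /mx11_mul1 BA]] | uA]; first by apply/unitrP; exists (B ord0 ord0).
by exists (A ord0 ord0)^-1%:M; rewrite !mx11_mul1 !mxE mulr1n divrr ?mulVr.
Qed.

(* The quasideterminant at (r, c) of the submatrix on rows r, r' and columns c, c'. *)
Definition qdet n (A : 'M[R]_n) (r c r' c' : 'I_n) : R :=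
  A r c - A r c' * (A r' c')^-1 * A r' c.

Lemma ulsubmx1_inv q (A : 'M[R]_(1 + q)) : A ord0 ord0 \is a GRing.unit ->
  ulsubmx A *m (A ord0 ord0)^-1%:M = 1%:M /\ (A ord0 ord0)^-1%:M *m ulsubmx A = 1%:M.
Proof.
have l0 : lshift q ord0 = ord0 :> 'I_(1 + q) by apply/val_inj.
by move=> uA; rewrite !mx11_mul1 !mxE l0 mulr1n divrr ?mulVr.
Qed.

Lemma schur_compl1E q (A : 'M[R]_(1 + q)) x y :
  schur_compl A (A ord0 ord0)^-1%:M x y = qdet A (rshift 1 x) (rshift 1 y) ord0 ord0.
Proof.
have l0 : lshift q ord0 = ord0 :> 'I_(1 + q) by apply/val_inj.
by rewrite !mxE !big_ord1 !mxE !big_ord1 !mxE l0 mulr1n.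
Qed.

Lemma mx_invertible_corner q (A : 'M[R]_(1 + q)) : A ord0 ord0 \is a GRing.unit ->
  mx_invertible A <-> mx_invertible (schur_compl A (A ord0 ord0)^-1%:M).
Proof. by move=> /ulsubmx1_inv[]; apply: mx_invertible_schur. Qed.

Lemma mx2_invertible (A : 'M[R]_2) : A ord0 ord0 \is a GRing.unit ->
  mx_invertible A <-> qdet A ord_max ord_max ord0 ord0 \is a GRing.unit.
Proof.
move=> uA; rewrite (@mx_invertible_corner 1 A uA) mx1_invertible schur_compl1E.
by have -> : rshift 1 ord0 = ord_max :> 'I_(1 + 1) by apply/val_inj.
Qed.

Lemma invrB_factor (w p n r : R) : p \is a GRing.unit -> r \is a GRing.unit ->
  w^-1 - p^-1 * n * r^-1 = - (p^-1 * (n - p * w^-1 * r) * r^-1).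
Proof. by move=> up ur; rewrite mulrBr mulrBl !mulrA mulVr // mul1r mulrK // opprB. Qed.

Lemma unit_schur_swap (a b c d : R) :
  a \is a GRing.unit -> c \is a GRing.unit -> d \is a GRing.unit ->
  d - c * a^-1 * b \is a GRing.unit -> a - b * d^-1 * c \is a GRing.unit.
Proof.
move=> ua uc ud us.
have -> : a - b * d^-1 * c = a * c^-1 * (d - c * a^-1 * b) * d^-1 * c.
  by rewrite mulrBr mulrBl mulrBl !mulrA mulrK // mulrVK // divrr // mul1r.
by rewrite !unitrMl ?unitrV.
Qed.

Lemma qdet_rev_inv_unit (K L : 'M[R]_2) (al be : 'I_2 -> R) :
  (forall x y, K x y \is a GRing.unit) ->
  (forall x, al x \is a GRing.unit) -> (forall y, be y \is a GRing.unit) ->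
  (forall x y, L x y = al x * (K (rev_ord y) (rev_ord x))^-1 * be y) ->
  qdet K ord_max ord_max ord0 ord0 \is a GRing.unit ->
  qdet L ord_max ord_max ord0 ord0 \is a GRing.unit.
Proof.
move=> uK ual ube LE uq.
have r0 : rev_ord (ord0 : 'I_2) = ord_max by apply/val_inj.
have r1 : rev_ord (ord_max : 'I_2) = ord0 by apply/val_inj.
rewrite /qdet !LE r0 r1 !invrM ?unitrMl ?unitrV // invrK !mulrA mulrK // mulrVK //.
rewrite -mulrBl -!mulrA -mulrBr !mulrA invrB_factor //.
by rewrite unitrMl // unitrMr // unitrN !unitrMl ?unitrV.
Qed.

End SchurComplement.

Lemma strict_incr_inj k (f : 'I_k -> 'I_3) : strict_incr f -> injective f.
Proof.
move=> sf i j fij; apply/eqP; apply: contraT; rewrite neq_ltn => /orP[] /sf;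
  by rewrite fij ltnn.
Qed.

Lemma strict_incr1 (f : 'I_1 -> 'I_3) : strict_incr f.
Proof. by move=> i j; rewrite !ord1. Qed.

Lemma strict_incr_lift (r : 'I_3) : strict_incr (lift r).
Proof. by move=> i j /=; rewrite /bump; case: leqP; case: leqP; lia. Qed.

Lemma strict_incr_id (f : 'I_3 -> 'I_3) : strict_incr f -> f =1 id.
Proof.
move=> sf [m lt_m3]; apply/val_inj => /=.
have f01 := sf (@Ordinal 3 0 isT) (@Ordinal 3 1 isT) isT.
have f12 := sf (@Ordinal 3 1 isT) (@Ordinal 3 2 isT) isT.
have := ltn_ord (f (@Ordinal 3 2 isT)).
by case: m lt_m3 => [|[|[|//]]] lt_m3; rewrite (bool_irrelevance lt_m3 isT); lia.
Qed.

Lemma strict_incr_pair (b : 'I_3) : (0 < b)%N -> strict_incr (tnth [tuple ord0; b]).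
Proof. by move=> b_gt0 [[|[|//]] ?] [[|[|//]] ?]. Qed.

Lemma exists_not_in_image (f : 'I_2 -> 'I_3) : injective f -> exists x, forall i, f i != x.
Proof.
move=> inj_f; case: (pickP [pred x | x \notin codom f]) => [x fx | full].
  by exists x => i; apply: contraNneq fx => <-; apply: codom_f.
have : (#|'I_3| <= #|codom f|)%N.
  by apply/subset_leq_card/subsetP => x _; move/negbFE: (full x).
by rewrite card_codom // !card_ord.
Qed.

Lemma uniq_rshift_rev (x : 'I_2) : uniq [:: rshift 1 (rev_ord x); rshift 1 x; ord0 : 'I_3].
Proof. by case: x => [[|[|//]] ?]. Qed.

Section Inverse3.
Variable R : unitRingType.

Definition minors_invertible (T : 'M[R]_3) : Prop :=
  forall k (f g : 'I_k -> 'I_3), (0 < k)%N -> strict_incr f -> strict_incr g ->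
    mx_invertible (sq_submx T f g).

Lemma minors_invertible_unit (T : 'M[R]_3) :
  minors_invertible T -> forall i j, T i j \is a GRing.unit.
Proof.
move=> HT i j; have := HT 1%N (fun=> i) (fun=> j) isT (strict_incr1 _) (strict_incr1 _).
by rewrite mx1_invertible mxE.
Qed.

Lemma minors_invertible_inv (M N : 'M[R]_3) :
  M *m N = 1%:M -> N *m M = 1%:M -> minors_invertible M -> minors_invertible N.
Proof.
move=> MN NM HM [|[|[|[|k]]]] f g // _ sf sg.
- apply: (@complementary_minor _ 2 1 M N (lift (f ord0)) (lift (g ord0))) => //.
  1,2: apply: glue_inj => [||j i]; [exact: lift_inj | exact: strict_incr_inj |];
    by rewrite (ord1 i) lift_eqF.
  exact: HM (strict_incr_lift _) (strict_incr_lift _).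
- have [x fx] := exists_not_in_image (strict_incr_inj sf).
  have [y gy] := exists_not_in_image (strict_incr_inj sg).
  apply: (@complementary_minor _ 1 2 M N (fun=> x) (fun=> y)) => //.
  1,2: apply: glue_inj => [||_ i];
    by [exact: strict_incr_inj (strict_incr1 _) | exact: strict_incr_inj | rewrite eq_sym].
  exact: HM (strict_incr1 _) (strict_incr1 _).
- have -> : sq_submx N f g = N.
    by apply/matrixP => i j; rewrite mxE (strict_incr_id sf) (strict_incr_id sg).
  by exists M.
- by have := leq_card f (strict_incr_inj sf); rewrite !card_ord.
Qed.

Lemma qdet_mulmx_inv (M N : 'M[R]_3) (o i i' j j' : 'I_3) :
  M *m N = 1%:M -> N *m M = 1%:M -> uniq [:: i'; i; o] -> uniq [:: j'; j; o] ->
  N j i \is a GRing.unit -> M i' j' \is a GRing.unit ->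
  qdet N o o j i * qdet M o o i' j' = 1 /\ qdet M o o i' j' * qdet N o o j i = 1.
Proof.
move=> MN NM /tuple_uniqP inj_t /tuple_uniqP inj_s uN uM.
set t := tnth [tuple i'; i; o] in inj_t; set s := tnth [tuple j'; j; o] in inj_s.
pose M' : 'M_(1 + 2) := mxsub t s M; pose N' : 'M_(1 + 2) := mxsub s t N.
have uM' : M' ord0 ord0 \is a GRing.unit by rewrite mxE.
have [ulM' M'ul] := ulsubmx1_inv uM'.
have [KL LK] := schur_compl_mulmx ulM' M'ul (mulmx_mxsub_perm MN (injF_bij inj_s) inj_t)
  (mulmx_mxsub_perm NM (injF_bij inj_t) inj_s).
set K : 'M_(1 + 1) := schur_compl _ _ in KL LK; set L : 'M_(1 + 1) := drsubmx N' in KL LK.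
have uL : L ord0 ord0 \is a GRing.unit by rewrite !mxE.
have [ulL Lul] := ulsubmx1_inv uL.
have := schur_compl_mulmx ulL Lul LK KL; rewrite !mx11_mul1 schur_compl1E.
have -> : qdet L (rshift 1 ord0) (rshift 1 ord0) ord0 ord0 = qdet N o o j i.
  by rewrite /qdet !mxE.
suff -> : drsubmx K ord0 ord0 = qdet M o o i' j' by [].
by rewrite [LHS]mxE [LHS]mxE /K schur_compl1E /qdet !mxE.
Qed.

Definition J2_schur (T : 'M[R]_3) : 'M[R]_2 :=
  schur_compl (J2 T : 'M_(1 + 2)) (J2 T ord0 ord0)^-1%:M.

Lemma J2_invertible (T : 'M[R]_3) : T ord0 ord0 \is a GRing.unit ->
  mx_invertible (J2 T) <-> mx_invertible (J2_schur T).
Proof. by move=> uT; apply: (@mx_invertible_corner _ 2); rewrite mxE unitrV. Qed.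

Lemma J2_schurE (T : 'M[R]_3) x y : (forall i j, T i j \is a GRing.unit) ->
  J2_schur T x y = - ((T ord0 (rshift 1 x))^-1
    * qdet T ord0 ord0 (rshift 1 y) (rshift 1 x) * (T (rshift 1 y) ord0)^-1).
Proof. by move=> uT; rewrite /J2_schur schur_compl1E /qdet !mxE invrK invrB_factor. Qed.

Lemma J2_schur_unit (T : 'M[R]_3) :
  minors_invertible T -> forall x y, J2_schur T x y \is a GRing.unit.
Proof.
move=> HT x y; have uT := minors_invertible_unit HT.
rewrite J2_schurE // unitrN unitrMr ?unitrV // unitrMl ?unitrV //.
set a := rshift 1 x; set b := rshift 1 y.
have := HT 2%N _ _ isT (@strict_incr_pair b (ltn0Sn y)) (@strict_incr_pair a (ltn0Sn x)).
rewrite mx2_invertible ?mxE // /qdet !mxE /=.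
by apply: unit_schur_swap.
Qed.

Lemma J2_schur_mulmx_inv (M N : 'M[R]_3) x y :
  M *m N = 1%:M -> N *m M = 1%:M -> minors_invertible M -> minors_invertible N ->
  J2_schur N x y =
    (N ord0 (rshift 1 x))^-1 * (M (rshift 1 (rev_ord x)) ord0)^-1
    * (J2_schur M (rev_ord y) (rev_ord x))^-1
    * ((M ord0 (rshift 1 (rev_ord y)))^-1 * (N (rshift 1 y) ord0)^-1).
Proof.
move=> MN NM HM HN; have uM := minors_invertible_unit HM.
have uN := minors_invertible_unit HN.
have [qNM qMN] := qdet_mulmx_inv MN NM (uniq_rshift_rev x) (uniq_rshift_rev y) (uN _ _) (uM _ _).
rewrite !J2_schurE //.
set X := qdet M _ _ _ _ in qNM qMN *; set Y := qdet N _ _ _ _ in qNM qMN *.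
have uX : X \is a GRing.unit by apply/unitrP; exists Y.
have -> : Y = X^-1 by rewrite -[Y]mulr1 -(divrr uX) mulrA qNM mul1r.
by rewrite invrN !invrM ?unitrMl ?unitrV // !invrK mulrN mulNr !mulrA mulrVK // mulrK //.
Qed.

End Inverse3.

Unset Implicit Arguments.

Theorem lemma11 (R : unitRingType) (M N : 'M[R]_3) :
  inS M -> M *m N = 1%:M -> N *m M = 1%:M -> inS N.
Proof.
move=> [uM [HM J2M]] MN NM.
have HN := minors_invertible_inv MN NM HM.
have uN := minors_invertible_unit HN.
split; [exact: uN | split; first exact: HN].
have qM : qdet (J2_schur M) ord_max ord_max ord0 ord0 \is a GRing.unit.
  by rewrite -mx2_invertible ?J2_schur_unit // -(J2_invertible (uM _ _)).
apply/(J2_invertible (uN _ _))/mx2_invertible; first exact: J2_schur_unit.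
apply: qdet_rev_inv_unit qM => [||| x y]; last exact: J2_schur_mulmx_inv.
- exact: J2_schur_unit.
- by move=> x; rewrite unitrMl ?unitrV.
- by move=> y; rewrite unitrMl ?unitrV.
Qed.
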